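(* Let $R_1,R_2$ be discrete valuation domains with maximal ideals $P_1=R_1p_1$ and $P_2=R_2p_2$, let $\overline{R}$ be a field and $\mathcal{V}_i:R_i\to\overline{R}$ ($i=1,2$) surjective ring homomorphisms with $\ker\mathcal{V}_i=P_i$, and let $R=\{(r_1,r_2)\in R_1\times R_2:\mathcal{V}_1(r_1)=\mathcal{V}_2(r_2)\}$ be the pullback ring. Then every non-zero indecomposable separated pseudo-absorbing primary multiplication $R$-module is isomorphic to one of the following $R$-modules: (1) $R$; (2) $(R_1/P_1^n\to\overline{R}\leftarrow R_2/P_2^m)$; (3) $(R_1\to\overline{R}\leftarrow R_2/P_2^m)$; (4) $(R_1/P_1^n\to\overline{R}\leftarrow R_2)$; where $m,n\geq 1$ are integers.
   Context: $R$ is a commutative local ring with maximal ideal $P=P_1\oplus P_2=\{(a,b):a\in P_1,b\in P_2\}$. For integers $n,m\ge1$ write $P_1^n\oplus 0=\{(a,0):a\in P_1^n\}$, $0\oplus P_2^m=\{(0,b):b\in P_2^m\}$, $P_1^n\oplus P_2^m=\{(a,b):a\in P_1^n,b\in P_2^m\}$; these are ideals of $R$. For an $R$-module $S$, $P_1S$ means $(P_1\oplus 0)S$ and $P_2S$ means $(0\oplus P_2)S$. An $R$-module $S$ is separated if $P_1S\cap P_2S=0$. For an $R_1$-module $A$ and an $R_2$-module $B$ together with surjections $g:A\to\overline{R}$, $h:B\to\overline{R}$ (here always the natural maps induced by $\mathcal{V}_1$, $\mathcal{V}_2$ on $R_1$, $R_1/P_1^n$, $R_2$, $R_2/P_2^m$),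 the notation $(A\to\overline{R}\leftarrow B)$ denotes the $R$-module $\{(a,b)\in A\oplus B: g(a)=h(b)\}$ with $(r_1,r_2)(a,b)=(r_1a,r_2b)$. A proper ideal $I$ of a commutative ring is 2-absorbing primary if whenever $abc\in I$ then $ab\in I$ or $ac\in\sqrt I$ or $bc\in\sqrt I$. A proper submodule $N$ of an $R$-module $M$ is pseudo-absorbing primary if $(N:_RM)=\{r\in R: rM\subseteq N\}$ is a 2-absorbing primary ideal of $R$. $M$ is a pseudo-absorbing primary multiplication module if for every pseudo-absorbing primary submodule $N$ of $M$ there is an ideal $I$ of $R$ with $N=IM$. *)

From HB Require Import structures.
From mathcomp Require Import all_boot all_algebra.

Set Implicit Arguments.
Unset Strict Implicit.
Unset Printing Implicit Defensive.

Import GRing.Theory.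
Local Open Scope ring_scope.

Definition rdvd {R : comNzRingType} (a b : R) : Prop := exists c : R, b = c * a.

(* A discrete valuation domain with uniformizer p (so its maximal ideal
   is P = R p): p is a nonzero nonunit and every nonzero element is a
   unit times a power of p.                                            *)
Definition DVR_with_uniformizer (R : idomainType) (p : R) : Prop :=
  [/\ p != 0, p \isn't a GRing.unit &
      forall r : R, r != 0 ->
        exists (u : R) (k : nat), u \is a GRing.unit /\ r = u * p ^+ k].

Section Pullback.
Variables (R1 R2 : comNzRingType) (F : fieldType)
  (V1 : {rmorphism R1 -> F}) (V2 : {rmorphism R2 -> F}).

Definition pb_pred : {pred R1 * R2} := [pred x | V1 x.1 == V2 x.2].

Lemma pb_subring_closed : subring_closed pb_pred.
Proof.
split.
- by rewrite inE /= !rmorph1.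
- move=> x y; rewrite !inE /= => /eqP h1 /eqP h2.
  by rewrite !rmorphB h1 h2.
- move=> x y; rewrite !inE /= => /eqP h1 /eqP h2.
  by rewrite !rmorphM h1 h2.
Qed.

HB.instance Definition _ := GRing.isSubringClosed.Build _ pb_pred
  pb_subring_closed.

Record pullback := Pullback { pbval : R1 * R2; _ : pbval \in pb_pred }.
HB.instance Definition _ := [isSub for pbval].
HB.instance Definition _ := [Choice of pullback by <:].
HB.instance Definition _ := [SubChoice_isSubComNzRing of pullback by <:].

End Pullback.

Section ModuleNotions.
Variables (R : comNzRingType) (M : lmodType R).

Definition is_ideal (I : R -> Prop) : Prop :=
  [/\ I 0, (forall a b, I a -> I b -> I (a + b)) &
      (forall r a, I a -> I (r * a))].

Definition is_submodule (N : M -> Prop) : Prop :=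
  [/\ N 0, (forall x y, N x -> N y -> N (x + y)) &
      (forall (r : R) x, N x -> N (r *: x))].

Definition proper_ideal (I : R -> Prop) : Prop := is_ideal I /\ ~ I 1.

Definition proper_submodule (N : M -> Prop) : Prop :=
  is_submodule N /\ exists x, ~ N x.

Definition rad (I : R -> Prop) : R -> Prop := fun r => exists n : nat, I (r ^+ n).

Definition two_absorbing_primary (I : R -> Prop) : Prop :=
  proper_ideal I /\
  forall a b c : R, I (a * b * c) -> [\/ I (a * b), rad I (a * c) | rad I (b * c)].

Definition colon (N : M -> Prop) : R -> Prop := fun r => forall x : M, N (r *: x).

Definition pseudo_absorbing_primary (N : M -> Prop) : Prop :=
  proper_submodule N /\ two_absorbing_primary (colon N).

Definition ideal_mul (I : R -> Prop) : M -> Prop :=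
  fun x => exists s : seq (R * M),
    (forall q, q \in s -> I q.1) /\ x = \sum_(q <- s) q.1 *: q.2.

Definition pap_multiplication_module : Prop :=
  forall N : M -> Prop, pseudo_absorbing_primary N ->
    exists I : R -> Prop, is_ideal I /\ forall x, N x <-> ideal_mul I x.

Definition nonzero_module : Prop := exists x : M, x <> 0.

Definition indecomposable : Prop :=
  nonzero_module /\
  forall A B : M -> Prop, is_submodule A -> is_submodule B ->
    (forall x, A x -> B x -> x = 0) ->
    (forall x, exists a b, [/\ A a, B b & x = a + b]) ->
    (forall x, A x -> x = 0) \/ (forall x, B x -> x = 0).

End ModuleNotions.

Section PullbackModules.
Variables (R1 R2 : idomainType) (F : fieldType) (p1 : R1) (p2 : R2)
  (V1 : {rmorphism R1 -> F}) (V2 : {rmorphism R2 -> F}).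

Local Notation R := (pullback V1 V2).

Definition P1_0 : R -> Prop := fun r => rdvd p1 (pbval r).1 /\ (pbval r).2 = 0.
Definition O_P2 : R -> Prop := fun r => (pbval r).1 = 0 /\ rdvd p2 (pbval r).2.

Definition separated (M : lmodType R) : Prop :=
  forall x : M, ideal_mul P1_0 x -> ideal_mul O_P2 x -> x = 0.

(* Congruence on R_i describing the component A of (A -> Rbar <- B):
   None   : A = R_i      (equality)
   Some n : A = R_i/P_i^n (congruence modulo p_i^n)                   *)
Definition congr_opt (S : idomainType) (p : S) (k : option nat) (a b : S) : Prop :=
  match k with
  | None => a = b
  | Some n => rdvd (p ^+ n) (a - b)
  end.

(* M is isomorphic to the R-module (A -> Rbar <- B), where A, B are given
   by kn, km as above.  Every element of (A -> Rbar <- B) is a pair of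
   classes (abar, bbar) whose representatives (a, b) satisfy
   V1 a = V2 b, i.e. (a,b) is an element of R; two representatives give
   the same element iff they are componentwise congruent, and the
   R-action (r1,r2)(a,b) = (r1 a, r2 b) is the product of R.  Thus an
   isomorphism (A -> Rbar <- B) ~= M is exactly an additive, R-linear,
   surjective psi : R -> M whose fibres are the congruence classes.     *)
Definition iso_to_pb (kn km : option nat) (M : lmodType R) : Prop :=
  exists psi : R -> M,
    [/\ (forall x y : R, psi (x + y) = psi x + psi y),
        (forall r x : R, psi (r * x) = r *: psi x),
        (forall m : M, exists x : R, psi x = m) &
        (forall x y : R, psi x = psi y <->
           (congr_opt p1 kn (pbval x).1 (pbval y).1 /\
            congr_opt p2 km (pbval x).2 (pbval y).2))].

End PullbackModules.

From Pilot Require Import Defs.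
From HB Require Import structures.
From mathcomp Require Import all_boot all_algebra.
From Stdlib Require Import Classical Wf_nat.

(* Write P = P1 (+) P2 = R e1 + R e2 with e1 = (p1, 0), e2 = (0, p2), so that
   e1 e2 = 0.  The module M is cyclic: a proper submodule containing P M has
   colon ideal P, which is prime, so by the multiplication property it is I M
   with I in P and lies in P M; hence R x + P M = M for every x outside P M,
   and for every x if P M = M.  If then R x <> M, no element of (R x : M) has
   two nonzero coordinates (it would divide powers of e1 and e2, while
   M = R x + e1^k M + e2^k M), and ideals of this kind are 2-absorbing primary;
   so R x = I M with I in P, whence x = p x with p in P, and x = 0.
   Thus M = R x, and separatedness splits ann x as J1 (+) J2 with J_i a proper
   ideal of the DVR R_i, i.e. 0 or P_i^n; the four combinations give the four
   modules of the list. *)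

Set Implicit Arguments.
Unset Strict Implicit.
Unset Printing Implicit Defensive.

Import GRing.Theory.
Local Open Scope ring_scope.

Section Divisibility.
Variable R : comNzRingType.
Implicit Types a b c : R.

Lemma rdvd_trans a b c : rdvd a b -> rdvd b c -> rdvd a c.
Proof. by move=> [x ->] [y ->]; exists (y * x); rewrite mulrA. Qed.

Lemma rdvd_exp2r a b n : rdvd a b -> rdvd (a ^+ n) (b ^+ n).
Proof. by move=> [x ->]; exists (x ^+ n); rewrite exprMn. Qed.

Lemma rdvd_exp2l a m n : (m <= n)%N -> rdvd (a ^+ m) (a ^+ n).
Proof. by move=> /subnK <-; exists (a ^+ (n - m)); rewrite exprD. Qed.

End Divisibility.

Definition positive_opt (k : option nat) : bool :=
  if k is Some n then (0 < n)%N else true.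

Section DVR.
Variables (S : idomainType) (p : S).
Hypothesis hS : DVR_with_uniformizer p.

Lemma dvr_unit_of_ndvd a : ~ rdvd p a -> a \is a GRing.unit.
Proof.
move=> ndvd; have a0 : a != 0.
  by apply/eqP => a0; apply: ndvd; exists 0; rewrite a0 mul0r.
case: hS => _ _ /(_ a a0) [u [[|k] [uU ea]]]; first by rewrite ea expr0 mulr1.
by exfalso; apply: ndvd; exists (u * p ^+ k); rewrite ea exprSr mulrA.
Qed.

Lemma dvr_dvd_exp z : z != 0 -> exists k, forall n, (k <= n)%N -> rdvd z (p ^+ n).
Proof.
case: hS => _ _ /[apply] -[u [k [uU ->]]]; exists k => n /(rdvd_exp2l p) [c ->].
by exists (c / u); rewrite mulrA mulrVK.
Qed.

Lemma dvr_proper_ideal_congr (J : S -> Prop) : Defs.proper_ideal J ->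
  exists2 k, positive_opt k & forall a b, J (a - b) <-> congr_opt p k a b.
Proof.
move=> [[J0 _ JM] J1].
have Jpow c : c != 0 -> J c -> exists2 k, J (p ^+ k) & rdvd (p ^+ k) c.
  case: hS => _ _ /[apply] -[u [k [uU ->]]] Jc; exists k; last by exists u.
  by rewrite -(mulKr uU (p ^+ k)); apply: JM.
case: (classic (exists2 c, c != 0 & J c)) => [[c c0 /(Jpow c c0) [k Jk _]]|J_0].
  have [n [[Jn nmin] _]] := dec_inh_nat_subset_has_unique_least_element
    (fun k => J (p ^+ k)) (fun k => classic _) (ex_intro _ k Jk).
  have JE e : J e <-> rdvd (p ^+ n) e.
    split=> [Je|[d ->]]; last exact: JM.
    have [->|e0] := eqVneq e 0; first by exists 0; rewrite mul0r.
    have [l Jl dvd_e] := Jpow e e0 Je.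
    exact/(rdvd_trans _ dvd_e)/rdvd_exp2l/leP/nmin.
  exists (Some n) => [|a b]; last exact: JE.
  by case: n Jn {nmin JE} => // /J1.
exists None => // a b /=; split=> [Jab|->]; last by rewrite subrr.
by apply/eqP; rewrite -subr_eq0; apply/negPn/negP => ab0; apply: J_0; exists (a - b).
Qed.

End DVR.

Lemma mulr3_eq0 (D : idomainType) (a b c : D) :
  a * b * c = 0 -> a * c = 0 \/ b * c = 0.
Proof.
move/eqP; rewrite !mulf_eq0 -orbA => /or3P[]/eqP->; rewrite ?mul0r ?mulr0;
by [left | right].
Qed.

Lemma mulr3_eq0_pair (D1 D2 : idomainType) (a1 b1 c1 : D1) (a2 b2 c2 : D2) :
  a1 * b1 * c1 = 0 -> a2 * b2 * c2 = 0 ->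
  [\/ a1 * b1 = 0 /\ a2 * b2 = 0, a1 * c1 = 0 /\ a2 * c2 = 0
    | b1 * c1 = 0 /\ b2 * c2 = 0].
Proof.
move/eqP; rewrite !mulf_eq0 => /orP[/orP[]|] /eqP->;
move/eqP; rewrite !mulf_eq0 => /orP[/orP[]|] /eqP->;
rewrite ?mul0r ?mulr0; first [by apply: Or31 | by apply: Or32 | by apply: Or33].
Qed.

Section IdealMul.
Variables (R : comNzRingType) (M : lmodType R).

Definition span1 (x : M) : M -> Prop := fun m => exists r : R, m = r *: x.

Definition ann (x : M) : R -> Prop := fun r => r *: x = 0.

Lemma span1_submodule x : is_submodule (span1 x).
Proof.
split.
- by exists 0; rewrite scale0r.
- by move=> a b [r ->] [s ->]; exists (r + s); rewrite scalerDl.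
- by move=> r a [s ->]; exists (r * s); rewrite scalerA.
Qed.

Lemma ann_ideal x : is_ideal (ann x).
Proof.
split; rewrite /ann.
- by rewrite scale0r.
- by move=> a b ax bx; rewrite scalerDl ax bx addr0.
- by move=> r a ax; rewrite -scalerA ax scaler0.
Qed.

Lemma proper_colon (N : M -> Prop) : proper_submodule N -> Defs.proper_ideal (colon N).
Proof.
move=> [[N0 ND NZ] [x nx]]; split; last by move/(_ x); rewrite scale1r.
split.
- by move=> m; rewrite scale0r.
- by move=> a b ha hb m; rewrite scalerDl; apply: ND.
- by move=> r a ha m; rewrite -scalerA; apply: NZ.
Qed.

Lemma ideal_mul_ind (I : R -> Prop) (Q : M -> Prop) :
  Q 0 -> (forall a b, Q a -> Q b -> Q (a + b)) ->
  (forall r m, I r -> Q (r *: m)) -> forall y, ideal_mul I y -> Q y.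
Proof.
move=> Q0 QD QZ y [s [hs ->]]; rewrite big_seq.
by apply: (big_ind Q) => // q qs; apply/QZ/hs.
Qed.

Lemma ideal_mul_scale (I : R -> Prop) r (m : M) : I r -> ideal_mul I (r *: m).
Proof.
move=> Ir; exists [:: (r, m)]; rewrite big_seq1; split=> // q.
by rewrite inE => /eqP ->.
Qed.

End IdealMul.

Section PullbackRing.
Variables (R1 R2 : idomainType) (F : fieldType) (p1 : R1) (p2 : R2)
  (V1 : {rmorphism R1 -> F}) (V2 : {rmorphism R2 -> F}).
Hypotheses (hR1 : DVR_with_uniformizer p1) (hR2 : DVR_with_uniformizer p2).
Hypotheses (hV1s : forall y, exists x, V1 x = y) (hV2s : forall y, exists x, V2 x = y).
Hypotheses (hV1k : forall x, V1 x = 0 <-> rdvd p1 x)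
  (hV2k : forall x, V2 x = 0 <-> rdvd p2 x).

Local Notation R := (pullback V1 V2).
Local Coercion pbval : pullback >-> prod.

Lemma pbvalP (x : R) : V1 x.1 = V2 x.2.
Proof. by case: x => v /= /eqP. Qed.

Definition pbmk a b (h : V1 a = V2 b) : R := @Pullback _ _ _ V1 V2 (a, b) (introT eqP h).

Lemma pullback_ext (x y : R) : x.1 = y.1 -> x.2 = y.2 -> x = y.
Proof. by move=> h1 h2; apply/val_inj/injective_projections. Qed.

Lemma pb_eq0 (x : R) : x.1 = 0 -> x.2 = 0 -> x = 0.
Proof. by move=> h1 h2; apply: pullback_ext; rewrite ?h1 ?h2. Qed.

Lemma pbvalD (x y : R) : pbval (x + y) = (x.1 + y.1, x.2 + y.2). Proof. by []. Qed.
Lemma pbvalN (x : R) : pbval (- x) = (- x.1, - x.2). Proof. by []. Qed.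
Lemma pbvalB (x y : R) : pbval (x - y) = (x.1 - y.1, x.2 - y.2). Proof. by []. Qed.
Lemma pbvalM (x y : R) : pbval (x * y) = (x.1 * y.1, x.2 * y.2). Proof. by []. Qed.

Lemma pbvalX (x : R) n : pbval (x ^+ n) = (x.1 ^+ n, x.2 ^+ n).
Proof. by elim: n => // n IH; rewrite !exprS pbvalM IH. Qed.

Lemma pb_fst_surj (a : R1) : exists y : R, y.1 = a.
Proof. by have [b hb] := hV2s (V1 a); exists (pbmk (esym hb)). Qed.

Lemma pb_snd_surj (b : R2) : exists y : R, y.2 = b.
Proof. by have [a ha] := hV1s (V2 b); exists (pbmk ha). Qed.

Lemma pb_p1 : V1 p1 = V2 0.
Proof. by rewrite rmorph0; apply/hV1k; exists 1; rewrite mul1r. Qed.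

Lemma pb_p2 : V1 0 = V2 p2.
Proof. by rewrite rmorph0; symmetry; apply/hV2k; exists 1; rewrite mul1r. Qed.

Definition e1 : R := pbmk pb_p1.
Definition e2 : R := pbmk pb_p2.

Lemma e1e2 : e1 * e2 = 0.
Proof. by apply: pullback_ext; rewrite /= ?mulr0 ?mul0r. Qed.

Definition maxideal (r : R) : Prop := V1 r.1 = 0.

Lemma maxidealE (r : R) : maxideal r <-> V2 r.2 = 0.
Proof. by rewrite /maxideal pbvalP. Qed.

Lemma maxideal_ideal : is_ideal maxideal.
Proof.
split; rewrite /maxideal.
- by rewrite rmorph0.
- by move=> a b ha hb; rewrite pbvalD rmorphD ha hb addr0.
- by move=> r a ha; rewrite pbvalM rmorphM ha mulr0.
Qed.

Lemma maxideal_e1 : maxideal e1.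
Proof. by rewrite /maxideal pb_p1 rmorph0. Qed.

Lemma maxideal_e2 : maxideal e2.
Proof. by rewrite /maxideal rmorph0. Qed.

Lemma pb_inverse (r : R) : ~ maxideal r -> exists s : R, s * r = 1.
Proof.
move=> nr; have u1 : r.1 \is a GRing.unit by apply: (dvr_unit_of_ndvd hR1) => /hV1k.
have u2 : r.2 \is a GRing.unit.
  by apply: (dvr_unit_of_ndvd hR2) => /hV2k /maxidealE.
have h : V1 r.1^-1 = V2 r.2^-1 by rewrite !rmorphV // pbvalP.
by exists (pbmk h); apply: pullback_ext; rewrite /= mulVr.
Qed.

Lemma maxideal_decomp (r : R) : maxideal r -> exists c d : R,
  [/\ pbval (c * e1) = (r.1, 0), pbval (d * e2) = (0, r.2) & r = c * e1 + d * e2].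
Proof.
move=> rP; have /hV1k [a ha] := rP; have /maxidealE/hV2k [b hb] := rP.
have [c hc] := pb_fst_surj a; have [d hd] := pb_snd_surj b.
have E1 : pbval (c * e1) = (r.1, 0) by rewrite pbvalM /= hc ha mulr0.
have E2 : pbval (d * e2) = (0, r.2) by rewrite pbvalM /= hd hb mulr0.
by exists c, d; split=> //; apply: pullback_ext; rewrite pbvalD E1 E2 /= ?addr0 ?add0r.
Qed.

Lemma two_absorbing_primary_maxideal (A : R -> Prop) :
  (forall r : R, A r <-> maxideal r) -> two_absorbing_primary A.
Proof.
move=> AE; have [P0 PD PZ] := maxideal_ideal.
split.
  split; first by split=> [|a b|r a]; rewrite !AE; [exact: P0 | exact: PD | exact: PZ].
  by rewrite AE /maxideal rmorph1 => /eqP; rewrite oner_eq0.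
move=> a b c; rewrite AE /maxideal !pbvalM /= !rmorphM => /eqP.
rewrite !mulf_eq0 -orbA => /or3P[] /eqP h.
- by apply: Or31; rewrite AE /maxideal pbvalM /= rmorphM h mul0r.
- by apply: Or31; rewrite AE /maxideal pbvalM /= rmorphM h mulr0.
- by apply: Or32; exists 1%N; rewrite expr1 AE /maxideal pbvalM /= rmorphM h mulr0.
Qed.

Lemma rad_of_fst_axis (A : R -> Prop) (z : R) :
  is_ideal A -> A z -> z.1 = 0 -> z.2 != 0 -> forall r : R, r.1 = 0 -> Defs.rad A r.
Proof.
move=> [_ _ AM] Az z1 z2 r r1.
have [k dvd_z] := dvr_dvd_exp hR2 z2.
have /hV2k dvd_r : V2 r.2 = 0 by rewrite -pbvalP r1 rmorph0.
have [c hc] := rdvd_trans (dvd_z k.+1 (leqnSn k)) (rdvd_exp2r k.+1 dvd_r).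
have [t ht] := pb_snd_surj c.
exists k.+1; suff -> : r ^+ k.+1 = t * z by exact: AM.
apply: pullback_ext; rewrite pbvalX pbvalM /= ?r1 ?z1 ?exprS ?mul0r ?mulr0 //.
by rewrite ht -exprS hc.
Qed.

Lemma rad_of_snd_axis (A : R -> Prop) (z : R) :
  is_ideal A -> A z -> z.2 = 0 -> z.1 != 0 -> forall r : R, r.2 = 0 -> Defs.rad A r.
Proof.
move=> [_ _ AM] Az z2 z1 r r2.
have [k dvd_z] := dvr_dvd_exp hR1 z1.
have /hV1k dvd_r : V1 r.1 = 0 by rewrite pbvalP r2 rmorph0.
have [c hc] := rdvd_trans (dvd_z k.+1 (leqnSn k)) (rdvd_exp2r k.+1 dvd_r).
have [t ht] := pb_fst_surj c.
exists k.+1; suff -> : r ^+ k.+1 = t * z by exact: AM.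
apply: pullback_ext; rewrite pbvalX pbvalM /= ?r2 ?z2 ?exprS ?mul0r ?mulr0 //.
by rewrite ht -exprS hc.
Qed.

Lemma two_absorbing_primary_of_axes (A : R -> Prop) : Defs.proper_ideal A ->
  (forall r : R, A r -> r.1 = 0 \/ r.2 = 0) -> two_absorbing_primary A.
Proof.
move=> [AI A1] axes; split=> // a b c Aabc.
have [[A0 _ _] rad0] : is_ideal A /\ forall y : R, y = 0 -> Defs.rad A y.
  by split=> // y ->; exists 1%N; rewrite expr1; case: AI.
have [abc0|abc_neq0] := eqVneq (a * b * c) 0.
  have [h1 h2] : (a * b * c).1 = 0 /\ (a * b * c).2 = 0 by rewrite abc0.
  move: h1 h2; rewrite !pbvalM /= => h1 h2.
  case: (mulr3_eq0_pair h1 h2) => -[u1 u2].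
  - by apply: Or31; rewrite (@pb_eq0 (a * b)).
  - by apply: Or32; apply/rad0/pb_eq0.
  - by apply: Or33; apply/rad0/pb_eq0.
have [h1|h2] := axes _ Aabc.
- have z2 : (a * b * c).2 != 0.
    by apply: contraNneq abc_neq0 => /(pb_eq0 h1) ->; rewrite eqxx.
  have Arad := rad_of_fst_axis AI Aabc h1 z2.
  move: h1; rewrite !pbvalM /= => /mulr3_eq0 [] h;
    [apply: Or32 | apply: Or33]; apply: Arad; by rewrite pbvalM.
- have z1 : (a * b * c).1 != 0.
    by apply: contraNneq abc_neq0 => /pb_eq0 /(_ h2) ->; rewrite eqxx.
  have Arad := rad_of_snd_axis AI Aabc h2 z1.
  move: h2; rewrite !pbvalM /= => /mulr3_eq0 [] h;
    [apply: Or32 | apply: Or33]; apply: Arad; by rewrite pbvalM.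
Qed.

Lemma dvd_exp_e1_e2 (r : R) : r.1 != 0 -> r.2 != 0 ->
  exists k (t1 t2 : R), e1 ^+ k.+1 = r * t1 /\ e2 ^+ k.+1 = r * t2.
Proof.
move=> r1 r2.
have [k1 dvd1] := dvr_dvd_exp hR1 r1; have [k2 dvd2] := dvr_dvd_exp hR2 r2.
have [c1 hc1] := dvd1 (maxn k1 k2) (leq_maxl _ _).
have [c2 hc2] := dvd2 (maxn k1 k2) (leq_maxr _ _).
have h1 : V1 (p1 * c1) = V2 0 by rewrite rmorphM pb_p1 rmorph0 mul0r.
have h2 : V1 0 = V2 (p2 * c2) by rewrite rmorphM -pb_p2 rmorph0 mul0r.
exists (maxn k1 k2), (pbmk h1), (pbmk h2).
by split; apply: pullback_ext;
  rewrite pbvalX pbvalM /= ?exprS ?mul0r ?mulr0 // ?hc1 ?hc2 mulrA mulrC.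
Qed.

Definition fst_part (A : R -> Prop) (a : R1) : Prop :=
  exists2 y, A y & pbval y = (a, 0).
Definition snd_part (A : R -> Prop) (b : R2) : Prop :=
  exists2 y, A y & pbval y = (0, b).

Lemma proper_fst_part (A : R -> Prop) : is_ideal A -> Defs.proper_ideal (fst_part A).
Proof.
move=> [A0 AD AM]; split; last first.
  move=> [y _ Ey]; move: (pbvalP y); rewrite Ey rmorph1 rmorph0 => /eqP.
  by rewrite oner_eq0.
split.
- by exists 0.
- move=> a b [y Ay Ey] [z Az Ez].
  by exists (y + z); [exact: AD | rewrite pbvalD Ey Ez /= addr0].
- move=> c a [y Ay Ey]; have [t ht] := pb_fst_surj c.
  by exists (t * y); [exact: AM | rewrite pbvalM Ey /= ht mulr0].
Qed.

Lemma proper_snd_part (A : R -> Prop) : is_ideal A -> Defs.proper_ideal (snd_part A).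
Proof.
move=> [A0 AD AM]; split; last first.
  move=> [y _ Ey]; move: (pbvalP y); rewrite Ey rmorph1 rmorph0 => /eqP.
  by rewrite eq_sym oner_eq0.
split.
- by exists 0.
- move=> a b [y Ay Ey] [z Az Ez].
  by exists (y + z); [exact: AD | rewrite pbvalD Ey Ez /= addr0].
- move=> c a [y Ay Ey]; have [t ht] := pb_snd_surj c.
  by exists (t * y); [exact: AM | rewrite pbvalM Ey /= ht mulr0].
Qed.

Lemma ideal_of_parts (A : R -> Prop) (r : R) : is_ideal A ->
  fst_part A r.1 -> snd_part A r.2 -> A r.
Proof.
move=> [_ AD _] [y Ay Ey] [z Az Ez].
suff -> : r = y + z by exact: AD.
by apply: pullback_ext; rewrite pbvalD Ey Ez /= ?addr0 ?add0r.
Qed.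

Section PullbackModule.
Variable M : lmodType R.
Implicit Types (m n u v x y : M) (N : M -> Prop) (r : R).

Definition PM m : Prop := exists u v, m = e1 *: u + e2 *: v.

Definition add_PM N m : Prop := exists n u v, N n /\ m = n + e1 *: u + e2 *: v.

Lemma PM0 : PM 0.
Proof. by exists 0, 0; rewrite !scaler0 addr0. Qed.

Lemma maxideal_scale_PM r : maxideal r -> forall m, PM (r *: m).
Proof.
move=> /maxideal_decomp [c [d [_ _ ->]]] m; exists (c *: m), (d *: m).
by rewrite scalerDl !scalerA [c * e1]mulrC [d * e2]mulrC.
Qed.

Lemma ideal_mul_PM (I : R -> Prop) : (forall r, I r -> maxideal r) ->
  forall y, ideal_mul I y -> PM y.
Proof.
move=> IP; apply: ideal_mul_ind => [|a b [u [v ->]] [u' [v' ->]]|r m /IP PMr].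
- exact: PM0.
- by exists (u + u'), (v + v'); rewrite !scalerDr addrACA.
- exact: maxideal_scale_PM.
Qed.

Lemma add_PM_PM N : N 0 -> forall m, PM m -> add_PM N m.
Proof. by move=> N0 m [u [v ->]]; exists 0, u, v; rewrite add0r. Qed.

Lemma add_PM_submodule N : is_submodule N -> is_submodule (add_PM N).
Proof.
move=> [N0 ND NZ]; split.
- exact: add_PM_PM PM0.
- move=> a b [n [u [v [Nn ->]]]] [n' [u' [v' [Nn' ->]]]].
  exists (n + n'), (u + u'), (v + v'); split; first exact: ND.
  by rewrite !scalerDr addrACA; congr (_ + _); exact: addrACA.
- move=> r a [n [u [v [Nn ->]]]]; exists (r *: n), (r *: u), (r *: v).
  by split; [exact: NZ | rewrite !scalerDr !scalerA [r * e1]mulrC [r * e2]mulrC].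
Qed.

Lemma add_PM_exp N : is_submodule N -> (forall m, add_PM N m) ->
  forall k m, exists n u v, N n /\ m = n + e1 ^+ k.+1 *: u + e2 ^+ k.+1 *: v.
Proof.
move=> [_ ND NZ] cov; elim=> [|k IH] m; first exact: cov.
have [n [u [v [Nn ->]]]] := IH m.
have [n1 [u1 [v1 [Nn1 ->]]]] := cov u; have [n2 [u2 [v2 [Nn2 ->]]]] := cov v.
exists (n + e1 ^+ k.+1 *: n1 + e2 ^+ k.+1 *: n2), u1, v2; split.
  exact: ND (ND _ _ Nn (NZ _ _ Nn1)) (NZ _ _ Nn2).
rewrite !scalerDr !scalerA -!exprSr.
have -> : e1 ^+ k.+1 * e2 = 0 by rewrite exprSr -mulrA e1e2 mulr0.
have -> : e2 ^+ k.+1 * e1 = 0 by rewrite exprSr -mulrA [e2 * e1]mulrC e1e2 mulr0.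
rewrite !scale0r !addr0 !addrA; congr (_ + _).
by rewrite -!addrA; congr (_ + _); rewrite !addrA addrAC.
Qed.

Lemma colon_axes N : proper_submodule N -> (forall m, add_PM N m) ->
  forall r, colon N r -> r.1 = 0 \/ r.2 = 0.
Proof.
move=> [sN [x nx]] cov r Nr; apply: NNPP => /not_or_and [/eqP r1 /eqP r2].
have [k [t1 [t2 [E1 E2]]]] := dvd_exp_e1_e2 r1 r2.
have [_ ND _] := sN; apply: nx; have [n [u [v [Nn ->]]]] := add_PM_exp sN cov k x.
by rewrite E1 E2 -!scalerA -addrA -scalerDr; apply: ND.
Qed.

Lemma fixed_by_maxideal_eq0 (x : M) p : maxideal p -> x = p *: x -> x = 0.
Proof.
move=> Pp xE; have h0 : (1 - p) *: x = 0 by rewrite scalerBl scale1r -xE subrr.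
have [s hs] : exists s, s * (1 - p) = 1.
  apply: pb_inverse; rewrite /maxideal pbvalB rmorphB rmorph1 Pp subr0 => /eqP.
  by rewrite oner_eq0.
by rewrite -[x]scale1r -hs -scalerA h0 scaler0.
Qed.

Lemma pap_ideal_mul N : pap_multiplication_module M -> pseudo_absorbing_primary N ->
  exists2 I, (forall r, I r -> maxideal r) & forall m, N m <-> ideal_mul I m.
Proof.
move=> pap papN; have [I [_ NI]] := pap N papN.
exists I => // r Ir; apply: NNPP => /pb_inverse [s sr].
have [[_ [m nm]] _] := papN; apply: nm.
by rewrite -[m]scale1r -sr mulrC -scalerA; apply/NI/ideal_mul_scale.
Qed.

Lemma PM_maximal N : pap_multiplication_module M -> is_submodule N ->
  (forall m, PM m -> N m) -> (forall m, N m) \/ (forall m, N m -> PM m).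
Proof.
move=> pap sN PMN; case: (classic (forall m, N m)) => [|/not_all_ex_not prop];
  [by left | right].
have colonE r : colon N r <-> maxideal r.
  split=> [Nr|/maxideal_scale_PM rPM m]; last exact/PMN/rPM.
  apply: NNPP => /pb_inverse [s sr]; have [m nm] := prop; apply: nm.
  by case: sN => _ _ NZ; rewrite -[m]scale1r -sr -scalerA; apply/NZ/Nr.
have [I IP NI] :=
  pap_ideal_mul pap (conj (conj sN prop) (two_absorbing_primary_maxideal colonE)).
by move=> m /NI; apply: ideal_mul_PM.
Qed.

Lemma ideal_mul_span1 x (I : R -> Prop) : (forall m, add_PM (span1 x) m) ->
  (forall r, I r -> maxideal r) -> (forall y, ideal_mul I y -> span1 x y) ->
  forall y, ideal_mul I y -> exists2 p, maxideal p & y = p *: x.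
Proof.
move=> cov IP Ix; have [P0 PD PZ] := maxideal_ideal.
apply: ideal_mul_ind => [|a b [p Pp ->] [q Pq ->]|r m Ir].
- by exists 0; rewrite ?scale0r.
- by exists (p + q); [exact: PD | rewrite scalerDl].
have [_ [u [v [[s ->] ->]]]] := cov m.
have [t rut] := Ix _ (ideal_mul_scale u Ir); have [t' rvt] := Ix _ (ideal_mul_scale v Ir).
exists (r * s + e1 * t + e2 * t').
  apply/PD; [apply/PD|]; rewrite mulrC; apply/PZ;
    [exact: IP | exact: maxideal_e1 | exact: maxideal_e2].
rewrite !scalerDl !scalerDr -!scalerA -rut -rvt !scalerA.
by rewrite [r * e1]mulrC [r * e2]mulrC.
Qed.

Lemma span1_full_or_eq0 x : pap_multiplication_module M -> (forall m, add_PM (span1 x) m) ->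
  (forall m, span1 x m) \/ x = 0.
Proof.
move=> pap cov; case: (classic (forall m, span1 x m)) => [|/not_all_ex_not prop];
  [by left | right].
have propN : proper_submodule (span1 x) := conj (span1_submodule x) prop.
have tap := two_absorbing_primary_of_axes (proper_colon propN) (colon_axes propN cov).
have [I IP NI] := pap_ideal_mul pap (conj propN tap).
have [p Pp xE] := ideal_mul_span1 cov IP (fun y => proj2 (NI y))
  (proj1 (NI x) (ex_intro _ 1 (esym (scale1r x)))).
exact: fixed_by_maxideal_eq0 Pp xE.
Qed.

Lemma pap_module_cyclic : pap_multiplication_module M -> nonzero_module M ->
  exists2 x, x <> 0 & forall m, span1 x m.
Proof.
have span0 x : span1 x 0 by exists 0; rewrite scale0r.
move=> pap [y y0]; case: (classic (forall m, PM m)) => [allPM|/not_all_ex_not [x nx]].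
  have cov m : add_PM (span1 y) m by apply: add_PM_PM (span0 y) _ (allPM m).
  by case: (span1_full_or_eq0 pap cov) => // gen; exists y.
have x0 : x <> 0 by move=> x0; apply: nx; rewrite x0; exact: PM0.
have xN : add_PM (span1 x) x.
  by exists x, 0, 0; split; [exists 1; rewrite scale1r | rewrite !scaler0 !addr0].
have [cov|/(_ x xN) //] :=
  PM_maximal pap (add_PM_submodule (span1_submodule x)) (add_PM_PM (span0 x)).
by case: (span1_full_or_eq0 pap cov) => // gen; exists x.
Qed.

Lemma ann_split x : separated p1 p2 M -> x <> 0 ->
  forall r, ann x r <-> fst_part (ann x) r.1 /\ snd_part (ann x) r.2.
Proof.
move=> sep x0 r; split=> [rx|[]]; last exact: ideal_of_parts (ann_ideal x).
have rP : maxideal r.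
  apply: NNPP => /pb_inverse [s sr]; apply: x0.
  by rewrite -[x]scale1r -sr -scalerA rx scaler0.
have [c [d [E1 E2 Er]]] := maxideal_decomp rP.
have sum0 : (c * e1) *: x + (d * e2) *: x = 0 by rewrite -scalerDl -Er.
have c0 : (c * e1) *: x = 0.
  apply: sep; first by apply: ideal_mul_scale; rewrite /P1_0 E1; split=> //; exact/hV1k.
  move/eqP: sum0; rewrite addr_eq0 => /eqP ->; rewrite -scaleNr.
  apply: ideal_mul_scale; rewrite /O_P2 pbvalN E2 /= oppr0; split=> //.
  by have /maxidealE/hV2k [w ->] := rP; exists (- w); rewrite mulNr.
split; first by exists (c * e1).
by exists (d * e2) => //; move: sum0; rewrite c0 add0r.
Qed.

Lemma scale_eq_congr x : separated p1 p2 M -> x <> 0 ->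
  exists k1 k2, [/\ positive_opt k1, positive_opt k2 &
    forall a b : R, a *: x = b *: x <->
      congr_opt p1 k1 a.1 b.1 /\ congr_opt p2 k2 a.2 b.2].
Proof.
move=> sep x0.
have [k1 pos1 ek1] := dvr_proper_ideal_congr hR1 (proper_fst_part (ann_ideal x)).
have [k2 pos2 ek2] := dvr_proper_ideal_congr hR2 (proper_snd_part (ann_ideal x)).
exists k1, k2; split=> // a b.
have annE : a *: x = b *: x <-> ann x (a - b).
  by rewrite /ann scalerBl; split=> [->|/eqP]; [rewrite subrr | rewrite subr_eq0 => /eqP].
rewrite -ek1 -ek2; apply: (iff_trans annE); exact: ann_split.
Qed.

Lemma separated_pap_module_iso : nonzero_module M -> separated p1 p2 M ->
  pap_multiplication_module M ->
  exists k1 k2, [/\ positive_opt k1, positive_opt k2 & iso_to_pb p1 p2 k1 k2 M].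
Proof.
move=> nz sep pap; have [x x0 gen] := pap_module_cyclic pap nz.
have [k1 [k2 [pos1 pos2 congrE]]] := scale_eq_congr sep x0.
exists k1, k2; split=> //; exists ( *:%R^~ x); split=> // [a b|r a|m].
- exact: scalerDl.
- by rewrite /= scalerA.
- by have [r ->] := gen m; exists r.
Qed.

End PullbackModule.

End PullbackRing.

Theorem theorem3p4
  (R1 R2 : idomainType) (Rbar : fieldType) (p1 : R1) (p2 : R2)
  (V1 : {rmorphism R1 -> Rbar}) (V2 : {rmorphism R2 -> Rbar})
  (hR1 : DVR_with_uniformizer p1) (hR2 : DVR_with_uniformizer p2)
  (hV1s : forall y : Rbar, exists x : R1, V1 x = y)
  (hV2s : forall y : Rbar, exists x : R2, V2 x = y)
  (hV1k : forall x : R1, V1 x = 0 <-> rdvd p1 x)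
  (hV2k : forall x : R2, V2 x = 0 <-> rdvd p2 x)
  (M : lmodType (pullback V1 V2)) :
  indecomposable M -> separated p1 p2 M -> pap_multiplication_module M ->
  [\/ iso_to_pb p1 p2 None None M,
      (exists n m : nat, [/\ (0 < n)%N, (0 < m)%N &
                            iso_to_pb p1 p2 (Some n) (Some m) M]),
      (exists m : nat, (0 < m)%N /\ iso_to_pb p1 p2 None (Some m) M)
    | (exists n : nat, (0 < n)%N /\ iso_to_pb p1 p2 (Some n) None M)].
Proof.
move=> [nz _] sep pap.
have [k1 [k2 [pos1 pos2 iso]]] :=
  separated_pap_module_iso hR1 hR2 hV1s hV2s hV1k hV2k nz sep pap.
by case: k1 k2 pos1 pos2 iso => [n|] [m|] /= pos1 pos2 iso;
  [apply: Or42; exists n, m | apply: Or44; exists n | apply: Or43; exists m | apply: Or41].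
Qed.
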